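(* Let $k\ge 1$. Suppose $k$ symbols $\circ$ and $k+2$ symbols $\bullet$ are placed at $2k+2$ pairwise distinct points of a circle in such a way that between any two adjacent $\circ$'s there are at most two $\bullet$'s. Then, reading the symbols around the circle in counterclockwise cyclic order, there exist consecutive symbols forming the pattern $$\bullet\,\bullet\,\underbrace{\circ\,\bullet\,\circ\,\bullet\cdots\circ\,\bullet}_{(\circ\,\bullet)^n}\,\bullet$$ for some $n\ge 1$.
   Context: Two $\circ$'s are called adjacent if, traversing the circle from one to the other in counterclockwise direction, no other $\circ$ is encountered; the condition bounds the number of $\bullet$'s encountered on each such arc. *)

From mathcomp Require Import all_boot.
Set Implicit Arguments. Unset Strict Implicit. Unset Printing Implicit Defensive.

(* A placement of symbols at 2k+2 distinct points of a circle is encoded by the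
   cyclic word read counterclockwise from an arbitrary starting point:
   [s : seq bool], with [true] = white circle (o) and [false] = bullet (•).
   Cyclic consecutive readings are the infixes of the rotations [rot i s]. *)

(* Number of bullets encountered going counterclockwise from the o at
   position i until the next o (the next o is the same one if it is alone). *)
Definition gap_after (s : seq bool) (i : nat) : nat :=
  find id (behead (rot i s)).

Definition adjacent_gaps_le2 (s : seq bool) : Prop :=
  forall i, i < size s -> nth false s i -> gap_after s i <= 2.

Definition pattern (n : nat) : seq bool :=
  [:: false; false] ++ flatten (nseq n [:: true; false]) ++ [:: false].

Definition occurs_cyclically (p s : seq bool) : Prop :=
  exists2 i, i < size s & infix p (rot i s).

From mathcomp Require Import all_boot.
From mathcomp Require Import zify.

Set Implicit Arguments.
Unset Strict Implicit.
Unset Printing Implicit Defensive.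

(* Rotate the cyclic word [s] so that
   it ends with an o, giving a linear word [u = rot m s].  The gap condition
   says that no o is followed (cyclically) by three bullets; since [s]
   contains an o, this forbids the factor • • • anywhere in [u].

   The heart of the proof is a counting statement about a word [v] containing
   neither • • • nor any pattern • • (o •)^n • with n >= 1: every factor of [v]
   ending with an o has at most one more bullet than o's.  It is proved by
   scanning the factor from the left, keeping track of whether we are right
   after an o ("balanced" state) or right after a pair • • followed by some
   blocks o • ("one bullet in credit" state); leaving the credit state is only
   possible through an o o, otherwise a pattern or a • • • appears.

   Applied to [u] itself, which has k o's and k+2 bullets, this is
   impossible.  Hence [u] contains the pattern, and so does some rotation of
   [s] by less than its length. *)

Lemma flatten_nseqSr (T : Type) (n : nat) (x : seq T) :
  flatten (nseq n.+1 x) = flatten (nseq n x) ++ x.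
Proof. by rewrite -flatten_rcons; congr flatten; elim: n => //= n ->. Qed.

Lemma size_pattern (n : nat) : size (pattern n) = (2 * n + 3)%N.
Proof.
rewrite /pattern !size_cat size_flatten /shape map_nseq sumn_nseq /=; lia.
Qed.

(* Occurrences of the patterns are bounded by the length of the word, so
   whether some pattern occurs is decidable. *)
Lemma pattern_occurrence_dichotomy (v : seq bool) :
  (exists2 n, 1 <= n & infix (pattern n) v) \/
  (forall n, 1 <= n -> ~~ infix (pattern n) v).
Proof.
have [/existsP [n /andP [n_gt0 occ]] | none] :=
  boolP [exists n : 'I_(size v), (0 < n) && infix (pattern n) v].
  by left; exists n.
right => n n_gt0; apply/negP => occ.
have n_lt : n < size v.
  by apply: leq_trans (size_infix occ); rewrite size_pattern; lia.
by move/existsP: none; apply; exists (Ordinal n_lt); rewrite n_gt0 occ.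
Qed.

Section PatternFree.

Variable v : seq bool.
Hypothesis no_triple_bullet : ~~ infix [:: false; false; false] v.
Hypothesis no_pattern : forall n, 1 <= n -> ~~ infix (pattern n) v.

(* A bullet right after • • (o •)^m closes either • • • (m = 0) or the
   pattern with m blocks. *)
Lemma credit_then_bullet (m : nat) (w : seq bool) :
  ~~ infix ([:: false; false] ++ flatten (nseq m [:: true; false]) ++
            false :: w) v.
Proof.
apply/negP; case: m => [|m] occ.
  move/negP: no_triple_bullet; apply.
  by apply: infix_trans occ; exact: prefix_infix.
move/negP: (no_pattern (ltn0Sn m)); apply; apply: infix_trans occ.
suff -> : [:: false; false] ++ flatten (nseq m.+1 [:: true; false]) ++
          false :: w = pattern m.+1 ++ w by exact: prefix_infix.
by rewrite /pattern -!catA.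
Qed.

(* The two scanning states, by induction on the length of the remaining word:
   (credit) after • • (o •)^m, a rest [w] ending with an o has more o's than
   bullets; (balanced) after an o, a rest [w] that is empty or ends with an o
   has at most one more bullet than o's. *)
Lemma pattern_free_scan (n : nat) :
  (forall w m, size w <= n ->
     infix ([:: false; false] ++ flatten (nseq m [:: true; false]) ++ w) v ->
     last false w -> count negb w < count id w) /\
  (forall w, size w <= n -> infix (true :: w) v -> last true w ->
     count negb w <= (count id w).+1).
Proof.
elim: n => [|n [IHcredit IHbalanced]]; first by split => -[].
split.
- move=> [|[|] w] m w_size occ /= w_last //; move: w_size => /= w_size.
  + case: w w_size occ w_last => [|[|] w] w_size occ /= w_last //;
      move: w_size => /= w_size.
    * (* o o : the credit is cancelled, continue from the second o *)
      have occ' : infix (true :: w) v.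
        apply: infix_trans occ; rewrite catA.
        exact: infix_trans (infix_cons _ true) (suffix_infix _ _).
      have := IHbalanced w (ltac:(lia)) occ' w_last; lia.
    * case: w w_size occ w_last => [|[|] w] w_size occ /= w_last //;
      move: w_size => /= w_size.
      -- (* o • o : one more block o • *)
         have occ' : infix ([:: false; false] ++
             flatten (nseq m.+1 [:: true; false]) ++ true :: w) v.
           by rewrite flatten_nseqSr -catA.
         have := IHcredit (true :: w) m.+1 (ltac:(simpl; lia)) occ' w_last.
         rewrite /=; lia.
      -- (* o • • : impossible *)
         move: occ.
         rewrite -[[:: true, false, false & w]]/([:: true; false] ++ false :: w).
         rewrite (catA (flatten _)) -flatten_nseqSr.
         by rewrite (negbTE (credit_then_bullet _ _)).
  + (* • : impossible *)
    by rewrite (negbTE (credit_then_bullet _ _)) in occ.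
- move=> [|[|] w] w_size occ /= w_last //; move: w_size => /= w_size.
  + (* o : continue from this o *)
    have := IHbalanced w (ltac:(lia)) (infix_trans (infix_cons _ _) occ) w_last.
    lia.
  + case: w w_size occ w_last => [|[|] w] w_size occ /= w_last //;
      move: w_size => /= w_size.
    * (* • o : continue from this o *)
      have occ' : infix (true :: w) v.
        exact: infix_trans (infix_trans (infix_cons _ _) (infix_cons _ _)) occ.
      have := IHbalanced w (ltac:(lia)) occ' w_last; lia.
    * (* • • : enter the credit state *)
      have := IHcredit w 0 (ltac:(lia)) (infix_trans (infix_cons _ _) occ) w_last.
      lia.
Qed.

Lemma pattern_free_balance (u : seq bool) :
  infix u v -> last false u -> count negb u <= (count id u).+1.
Proof.
have [credit balanced] := pattern_free_scan (size u).
case: u credit balanced => [|[|] w] //= credit balanced occ u_last.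
  by have := balanced w (leqnSn _) occ u_last; lia.
case: w credit balanced occ u_last => [|[|] w] //= credit balanced occ u_last.
  have := balanced w (ltac:(lia)) (infix_trans (infix_cons _ _) occ) u_last.
  lia.
by have := credit w 0 (ltac:(lia)) occ u_last; lia.
Qed.

End PatternFree.

Section Cyclic.

Variable s : seq bool.

Lemma rot_reduce (m : nat) :
  0 < size s -> exists2 r, r < size s & rot m s = rot r s.
Proof.
move=> s_gt0; case: (ltnP m (size s)) => m_size; first by exists m.
by exists 0; rewrite // rot_oversize // rot0.
Qed.

Lemma occurs_cyclically_rot (p : seq bool) (m : nat) :
  0 < size s -> infix p (rot m s) -> occurs_cyclically p s.
Proof.
move=> s_gt0 occ; have [r r_lt Er] := rot_reduce m s_gt0.
by exists r; rewrite -?Er.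
Qed.

Lemma leading_bullets_le2 :
  adjacent_gaps_le2 s -> forall m w, rot m s = true :: w -> find id w <= 2.
Proof.
move=> gaps m w Em.
have s_gt0 : 0 < size s by rewrite -(size_rot m) Em.
have [r r_lt Er] := rot_reduce m s_gt0; rewrite Er in Em.
have o_at_r : nth false s r.
  by move: Em; rewrite /rot (drop_nth false r_lt) => -[->].
by have := gaps r r_lt o_at_r; rewrite /gap_after Em.
Qed.

Lemma split_last_o (x : seq bool) :
  has id x -> exists c d, x = c ++ true :: d /\ ~~ has id d.
Proof.
elim: x => [|y x IH] //= has_o.
case has_o_x: (has id x).
  by have [c [d [-> no_o_d]]] := IH has_o_x; exists (y :: c), d.
by move: has_o; rewrite has_o_x orbF => y_o; exists [::], x; rewrite y_o has_o_x.
Qed.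

(* If [s] contains an o, no rotation of [s] contains • • •: the last o before
   such a factor, cyclically, would be followed by at least three bullets. *)
Lemma no_triple_bullet_rot (m : nat) :
  adjacent_gaps_le2 s -> has id s -> ~~ infix [:: false; false; false] (rot m s).
Proof.
move=> gaps has_o; apply/negP => /infixP [a [b Em]].
have [c [d [Ecd no_o_d]]] : exists c d, b ++ a = c ++ true :: d /\ ~~ has id d.
  by apply: split_last_o; move: has_o; rewrite -(has_rot m) Em !has_cat orbC.
have Erot : rot (size c) (rot (size (a ++ [:: false; false; false])) (rot m s)) =
            true :: d ++ [:: false; false; false] ++ c.
  by rewrite Em catA rot_size_cat (catA b) Ecd -catA rot_size_cat -catA.
rewrite !rot_rot_add in Erot.
have := leading_bullets_le2 gaps Erot.
by rewrite find_cat (negbTE no_o_d) /=; lia.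
Qed.

(* Rotating just past the first o gives a word ending with an o. *)
Lemma rot_ending_in_o : has id s -> exists m, last false (rot m s).
Proof.
move=> has_o; set j := find id s.
have j_lt : j < size s by rewrite -has_find.
exists (rot_add s j 1); rewrite -rot_rot_add.
have -> : rot j s = nth false s j :: (drop j.+1 s ++ take j s).
  by rewrite /rot (drop_nth false j_lt).
by rewrite rot1_cons last_rcons; exact: (nth_find false has_o).
Qed.

Lemma count_rot (a : pred bool) (m : nat) : count a (rot m s) = count a s.
Proof. by apply/permP; rewrite perm_rot. Qed.

End Cyclic.

Theorem mainTheorem4 (k : nat) (s : seq bool) :
  1 <= k ->
  size s = (2 * k + 2)%N ->
  count id s = k ->
  count negb s = k + 2 ->
  adjacent_gaps_le2 s ->
  exists2 n, 1 <= n & occurs_cyclically (pattern n) s.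
Proof.
move=> k_ge1 s_size count_o count_b gaps.
have has_o : has id s by rewrite has_count count_o.
have s_gt0 : 0 < size s by rewrite s_size addn2.
have [m u_last] := rot_ending_in_o has_o.
have no_triple := no_triple_bullet_rot m gaps has_o.
case: (pattern_occurrence_dichotomy (rot m s)) => [[n n_ge1 occ] | no_pattern].
  by exists n => //; apply: occurs_cyclically_rot occ.
(* otherwise it would have at most one more bullet than o's, but it has
   k o's and k + 2 bullets *)
have := pattern_free_balance no_triple no_pattern (infix_refl _) u_last.
by rewrite !count_rot count_o count_b; lia.
Qed.
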